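(* Let $A\in\mathbb{R}^{d\times n}$ (with $n>d$) have nonzero columns $a_1,\dots,a_n$, and let $\tilde A=[A,-A]$ with columns $\tilde a_1,\dots,\tilde a_{2n}$ (so $\tilde a_j=a_j$ and $\tilde a_{n+j}=-a_j$). Let $x_0\in\mathbb{R}^n$ with support $S=\{i:(x_0)_i\neq 0\}$. Let $x_{\mathrm{opt}}\in\mathbb{R}^{|S|}$ be the vector of nonzero entries of $x_0$ and $A_{\mathrm{opt}}$ the matrix of the corresponding columns $a_i$, $i\in S$. Define $\tilde x_0\in\mathbb{R}^{2n}$ by $(\tilde x_0)_i=\max((x_0)_i,0)$ and $(\tilde x_0)_{n+i}=\max(-(x_0)_i,0)$ for $1\le i\le n$, let $\tilde S=\{j:(\tilde x_0)_j>0\}$, and let $\tilde A_{\mathrm{opt}}$ be the matrix of the columns $\tilde a_j$, $j\in\tilde S$. Then for a vector $c\in\mathbb{R}^d$ the following are equivalent: (i) $A_{\mathrm{opt}}$ has full column rank, $A_{\mathrm{opt}}^Tc=\operatorname{sign}(x_{\mathrm{opt}})$, and $|a_j^Tc|<1$ for all $j\notin S$; (ii) $\tilde A_{\mathrm{opt}}$ has full column rank, $\tilde a_j^Tc=1$ for all $j\in\tilde S$, and $\tilde a_j^Tc<1$ for all $j\in\{1,\dots,2n\}\setminus\tilde S$.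
   Context: $\operatorname{sign}$ is applied componentwise. *)

From HB Require Import structures.
From mathcomp Require Import all_boot all_order all_algebra.
From mathcomp Require Import reals.
Set Implicit Arguments. Unset Strict Implicit. Unset Printing Implicit Defensive.
Import Order.TTheory GRing.Theory Num.Theory.
Local Open Scope ring_scope.

Definition subcols (R : realType) (m n : nat) (A : 'M[R]_(m, n)) (S : {set 'I_n})
  : 'M[R]_(m, #|S|) :=
  colsub (fun k : 'I_#|S| => @enum_val _ (mem S) k) A.

Definition subvec (R : realType) (n : nat) (x : 'cV[R]_n) (S : {set 'I_n})
  : 'cV[R]_#|S| :=
  rowsub (fun k : 'I_#|S| => @enum_val _ (mem S) k) x.

Definition supp (R : realType) (n : nat) (x : 'cV[R]_n) : {set 'I_n} :=
  [set i | x i 0 != 0].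

Definition coldot (R : realType) (m n : nat) (A : 'M[R]_(m, n)) (j : 'I_n)
  (c : 'cV[R]_m) : R :=
  ((col j A)^T *m c) 0 0.

Definition Atil (R : realType) (m n : nat) (A : 'M[R]_(m, n)) : 'M[R]_(m, n + n) :=
  row_mx A (- A).

Definition xtil (R : realType) (n : nat) (x : 'cV[R]_n) : 'cV[R]_(n + n) :=
  col_mx (\col_i Num.max (x i 0) 0) (\col_i Num.max (- x i 0) 0).

Definition Stil (R : realType) (n : nat) (x : 'cV[R]_n) : {set 'I_(n + n)} :=
  [set j | 0 < xtil x j 0].

From mathcomp Require Import all_boot all_order all_algebra.
From mathcomp Require Import reals.
From mathcomp Require Import lra.
Set Implicit Arguments. Unset Strict Implicit.
Import Order.TTheory GRing.Theory Num.Theory.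
Local Open Scope ring_scope.

(* Since the columns of [A~] are the a_i and the -a_i, and [x~] places the
   positive part of (x0)_i at index i and its negative part at index n + i,
   S~ selects exactly one of a_i, -a_i for each i in S.  Hence A~_opt and
   A_opt have the same number of columns and, up to sign, the same columns,
   so the same rank.  The dual conditions decouple over i: for each i the pair
   of conditions on a~_i^T c and a~_(n+i)^T c says a_i^T c = sign (x0)_i when
   (x0)_i <> 0 and -1 < a_i^T c < 1 otherwise. *)

Lemma mxrank_le_scaled_cols (F : fieldType) m p q
    (M : 'M[F]_(m, p)) (N : 'M[F]_(m, q)) :
  (forall l, exists k a, col l N = a *: col k M) -> (\rank N <= \rank M)%N.
Proof.
move=> scaledN; rewrite -mxrank_tr -[X in (_ <= X)%N]mxrank_tr; apply: mxrankS.
apply/row_subP => l; have [k [a colNl]] := scaledN l.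
by rewrite -tr_col colNl linearZ /= tr_col scalemx_sub ?row_sub.
Qed.

Lemma col_subcols (R : realType) m n (M : 'M[R]_(m, n)) S k :
  col k (subcols M S) = col (enum_val k) M.
Proof. exact: col_colsub. Qed.

Lemma mxrank_subcols_le (R : realType) m p q (M : 'M[R]_(m, p)) (N : 'M[R]_(m, q))
    (S : {set 'I_p}) (T : {set 'I_q}) :
  (forall j, j \in T -> exists2 i, i \in S & exists a, col j N = a *: col i M) ->
  (\rank (subcols N T) <= \rank (subcols M S))%N.
Proof.
move=> scaledN; apply: mxrank_le_scaled_cols => l.
have [i iS [a colNl]] := scaledN _ (enum_valP l).
by exists (enum_rank_in iS i), a; rewrite !col_subcols enum_rankK_in.
Qed.

Lemma sg_dual_split (R : realDomainType) (xi a : R) :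
  (if xi == 0 then (`|a| < 1 : Prop) else a = Num.sg xi) <->
  (if 0 < xi then a = 1 else a < 1) /\ (if xi < 0 then - a = 1 else - a < 1).
Proof.
case: (ltrgtP xi 0) => [xi_lt0 | xi_gt0 | _] /=.
- rewrite ltr0_sg //; split=> [-> | [_ <-]]; last by rewrite opprK.
  by split; [lra | rewrite opprK].
- by rewrite gtr0_sg //; split=> [-> | [] //]; split; lra.
- by rewrite ltr_norml; split=> [/andP[] | []] *; [split | ]; lra.
Qed.

Section SignSplitting.
Variables (R : realType) (m n : nat) (A : 'M[R]_(m, n)) (x : 'cV[R]_n).

Lemma mem_supp i : (i \in supp x) = (x i 0 != 0).
Proof. by rewrite inE. Qed.

Lemma mem_Stil_lshift i : (lshift n i \in Stil x) = (0 < x i 0).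
Proof. by rewrite inE /xtil col_mxEu mxE lt_max ltxx orbF. Qed.

Lemma mem_Stil_rshift i : (rshift n i \in Stil x) = (x i 0 < 0).
Proof. by rewrite inE /xtil col_mxEd mxE lt_max ltxx orbF oppr_gt0. Qed.

Lemma card_Stil : #|Stil x| = #|supp x|.
Proof.
rewrite -!sum1_card big_split_ord [RHS](bigID (fun i => 0 < x i 0)) /=.
congr (_ + _)%N; apply: eq_bigl => i.
- by rewrite mem_Stil_lshift mem_supp andb_idl // => /gt_eqF ->.
- by rewrite mem_Stil_rshift mem_supp; case: ltrgtP.
Qed.

Lemma col_Atil_lshift i : col (lshift n i) (Atil A) = col i A.
Proof. exact: colKl. Qed.

Lemma col_Atil_rshift i : col (rshift n i) (Atil A) = - col i A.
Proof. by rewrite /Atil colKr linearN. Qed.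

Lemma coldot_Atil_lshift i c : coldot (Atil A) (lshift n i) c = coldot A i c.
Proof. by rewrite /coldot col_Atil_lshift. Qed.

Lemma coldot_Atil_rshift i c : coldot (Atil A) (rshift n i) c = - coldot A i c.
Proof. by rewrite /coldot col_Atil_rshift linearN /= mulNmx mxE. Qed.

Lemma col_Atil_Stil j :
  j \in Stil x -> exists2 i, i \in supp x & exists a, col j (Atil A) = a *: col i A.
Proof.
case: (split_ordP j) => i ->.
- rewrite mem_Stil_lshift => /gt_eqF xi_neq0.
  exists i; first by rewrite mem_supp xi_neq0.
  by exists 1; rewrite col_Atil_lshift scale1r.
- rewrite mem_Stil_rshift => /lt_eqF xi_neq0.
  exists i; first by rewrite mem_supp xi_neq0.
  by exists (-1); rewrite col_Atil_rshift scaleN1r.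
Qed.

Lemma col_supp_Atil i :
  i \in supp x -> exists2 j, j \in Stil x & exists a, col i A = a *: col j (Atil A).
Proof.
rewrite mem_supp; case: ltrgtP => // [xi_lt0 | xi_gt0] _.
- exists (rshift n i); first by rewrite mem_Stil_rshift.
  by exists (-1); rewrite col_Atil_rshift scaleN1r opprK.
- exists (lshift n i); first by rewrite mem_Stil_lshift.
  by exists 1; rewrite col_Atil_lshift scale1r.
Qed.

Lemma rank_subcols_Atil_Stil :
  \rank (subcols (Atil A) (Stil x)) = \rank (subcols A (supp x)).
Proof.
apply/anti_leq/andP; split; apply: mxrank_subcols_le.
- exact: col_Atil_Stil.
- exact: col_supp_Atil.
Qed.

Lemma tr_subcols_mul_sgP c :
  (subcols A (supp x))^T *m c = map_mx Num.sg (subvec x (supp x)) <->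
  {in supp x, forall i, coldot A i c = Num.sg (x i 0)}.
Proof.
have entryE k : ((subcols A (supp x))^T *m c) k 0 = coldot A (enum_val k) c.
  by rewrite /coldot -col_subcols tr_col !mxE; apply: eq_bigr => r _; rewrite !mxE.
split=> [eq_sg i i_supp | on_supp].
- have /matrixP/(_ (enum_rank_in i_supp i) 0) := eq_sg.
  by rewrite entryE !mxE enum_rankK_in.
- by apply/matrixP => k z; rewrite ord1 entryE !mxE on_supp ?enum_valP.
Qed.

Lemma dual_cert_suppP c :
  (subcols A (supp x))^T *m c = map_mx Num.sg (subvec x (supp x)) /\
  (forall j, j \notin supp x -> `|coldot A j c| < 1) <->
  forall i, if x i 0 == 0 then (`|coldot A i c| < 1 : Prop)
            else coldot A i c = Num.sg (x i 0).
Proof.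
rewrite tr_subcols_mul_sgP; split=> [[on_supp off_supp] i | cert].
- by have := on_supp i; have := off_supp i; rewrite mem_supp; case: eqP => [_ -> | _ _ ->].
- by split=> i; rewrite mem_supp; have := cert i; case: eqP.
Qed.

Lemma dual_cert_StilP c :
  (forall j, j \in Stil x -> coldot (Atil A) j c = 1) /\
  (forall j, j \notin Stil x -> coldot (Atil A) j c < 1) <->
  forall i, (if 0 < x i 0 then coldot A i c = 1 else coldot A i c < 1) /\
            (if x i 0 < 0 then - coldot A i c = 1 else - coldot A i c < 1).
Proof.
split=> [[on_Stil off_Stil] i | cert].
- rewrite -coldot_Atil_rshift -coldot_Atil_lshift -mem_Stil_lshift -mem_Stil_rshift.
  by split; case: ifPn => [/on_Stil | /off_Stil].
- suff cert_til j : if j \in Stil x then coldot (Atil A) j c = 1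
                    else coldot (Atil A) j c < 1.
    by split=> j; have := cert_til j; case: (j \in Stil x).
  case: (split_ordP j) => i ->; have [cert_l cert_r] := cert i.
  + by rewrite mem_Stil_lshift coldot_Atil_lshift.
  + by rewrite mem_Stil_rshift coldot_Atil_rshift.
Qed.

End SignSplitting.

Theorem lemma2 (R : realType) (d n : nat) (A : 'M[R]_(d, n)) (x0 : 'cV[R]_n)
  (c : 'cV[R]_d) :
  (d < n)%N ->
  (forall j : 'I_n, col j A != 0) ->
  ( [/\ \rank (subcols A (supp x0)) = #|supp x0|,
        (subcols A (supp x0))^T *m c = map_mx Num.sg (subvec x0 (supp x0))
      & forall j : 'I_n, j \notin supp x0 -> `|coldot A j c| < 1] )
  <->
  ( [/\ \rank (subcols (Atil A) (Stil x0)) = #|Stil x0|,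
        (forall j : 'I_(n + n), j \in Stil x0 -> coldot (Atil A) j c = 1)
      & forall j : 'I_(n + n), j \notin Stil x0 -> coldot (Atil A) j c < 1] ).
Proof.
move=> _ _; rewrite rank_subcols_Atil_Stil card_Stil.
split=> [[rank_eq sg_eq off_supp] | [rank_eq on_Stil off_Stil]].
- have /dual_cert_suppP cert := conj sg_eq off_supp.
  have [|on_Stil off_Stil] := (dual_cert_StilP A x0 c).2.
    by move=> i; apply/sg_dual_split/cert.
  by split.
- have /dual_cert_StilP cert := conj on_Stil off_Stil.
  have [|sg_eq off_supp] := (dual_cert_suppP A x0 c).2.
    by move=> i; apply/sg_dual_split/cert.
  by split.
Qed.
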